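(* Let $h:\mathbb{R}\to\mathbb{R}$ be a smooth function with $h(T)=\pi/2$ for $T\le 0$, $0<h(T)<\pi/2$ for $0<T<1$, and $h(T)=0$ for $T\ge 1$. For $0<x<1$ let $g(x)=\tan\bigl(h(x)\bigr)$, and for $0\le x<1$ let $B(x)=\exp\left(\int_0^x \cot\bigl(h(z)\bigr)\,dz\right)$. Assume $g'''(x)<0$ for all $0<x<1$. Define, for $0<x<1$, $$\mathcal{C}(x)=\frac{1}{B(x)}\int_0^{x}\cos(x-z)\,B'(z)\,\frac{g(x)-g(z)}{x-z}\,dz .$$ Then $\lim_{x\to 1_-}\mathcal{C}(x)=0$.
   Context: The quotient $\frac{g(x)-g(z)}{x-z}$ is understood as $g'(x)$ at $z=x$. (In the paper the variable $x$ appears as $y+A$.) *)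

From Stdlib Require Import Reals.
From Coquelicot Require Import Coquelicot.
Open Scope R_scope.

Definition smooth (h : R -> R) : Prop :=
  forall (n : nat) (x : R), ex_derive (Derive_n h n) x.

Definition cot (t : R) : R := cos t / sin t.

(* g(x) = tan(h(x)) (only used for 0 < x < 1 / on [0,x] inside an integral) *)
Definition g_of (h : R -> R) (x : R) : R := tan (h x).

Definition B_of (h : R -> R) (x : R) : R :=
  exp (RInt (fun z => cot (h z)) 0 x).

Definition dq (g : R -> R) (x z : R) : R :=
  match Req_EM_T z x with
  | left _ => Derive g x
  | right _ => (g x - g z) / (x - z)
  end.

Definition C_of (h : R -> R) (x : R) : R :=
  / B_of h x *
  RInt (fun z => cos (x - z) * Derive (B_of h) z * dq (g_of h) x z) 0 x.

(* Write b = cot o h, so that B' = b B and b g = 1 on (0, 1). As g >= 0 vanishes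
   at 1, g'(1) = 0, and continuity of g' gives g(z) = o(1 - z) as z -> 1; hence
   b = 1/g is not integrable up to 1 and B(x) -> +oo.  Split the integral defining
   C(x) at a = x - ep.  On [a, x] the difference quotient is bounded by sup |g'|,
   which is small near 1, so this part is at most sup |g'| * B(x).  On [0, a] the
   identity B'(z) (g(x) - g(z)) = B'(z) g(x) - B(z) bounds the integrand by
   (B'(z) + B(a)) / ep, so this part is at most 2 B(1 - ep) / ep, negligible
   against B(x). *)

From Stdlib Require Import Reals Lra.
From Coquelicot Require Import Coquelicot.
Open Scope R_scope.

Lemma at_left_of_interval (x d : R) (P : R -> Prop) :
  0 < d -> (forall y, x - d < y < x -> P y) -> at_left x P.
Proof.
  intros Hd HP. exists (mkposreal d Hd). intros y Hy Hyx. apply HP.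
  change (Rabs (y - x) < d) in Hy. apply Rabs_def2 in Hy. lra.
Qed.

Lemma Derive_local_min (f : R -> R) (a b c : R) :
  a < c < b -> ex_derive f c -> (forall y, a < y < b -> f c <= f y) ->
  Derive f c = 0.
Proof.
  intros Hc Hf Hmin. rewrite <- (Derive_Reals f c (ex_derive_Reals_0 f c Hf)).
  apply (deriv_minimum f a b c); try lra. intros y Hay Hyb. apply Hmin. lra.
Qed.

Lemma continuous_dq (f : R -> R) (x z : R) :
  ex_derive f x -> ex_derive f z -> continuous (dq f x) z.
Proof.
  intros Hx Hz. destruct (Req_dec z x) as [->|Hzx].
  - apply filterlim_locally. intros e.
    destruct (proj1 (is_derive_Reals f x _) (Derive_correct f x Hx) e (cond_pos e))
      as [d Hd].
    exists d. intros y Hy. change R in y. change (Rabs (dq f x y - dq f x x) < e).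
    unfold dq. destruct (Req_EM_T x x) as [_|Hxx]; [|contradiction].
    destruct (Req_EM_T y x) as [->|Hyx].
    + rewrite Rminus_diag, Rabs_R0. apply cond_pos.
    + change (Rabs (y - x) < d) in Hy.
      specialize (Hd (y - x) ltac:(lra) Hy).
      replace (x + (y - x)) with y in Hd by ring.
      replace ((f x - f y) / (x - y)) with ((f y - f x) / (y - x)) by (field; lra).
      exact Hd.
  - apply (continuous_ext_loc _ (fun y => (f x - f y) / (x - y))).
    + exists (mkposreal _ (Rabs_pos_lt (z - x) ltac:(lra))). intros y Hy.
      change (Rabs (y - z) < Rabs (z - x)) in Hy.
      unfold dq. destruct (Req_EM_T y x) as [->|]; [|reflexivity].
      rewrite Rabs_minus_sym in Hy. lra.
    + apply (@ex_derive_continuous R_AbsRing R_NormedModule).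
      auto_derive. repeat split; auto. lra.
Qed.

Lemma Rabs_dq_le (f : R -> R) (x z e : R) :
  (forall t, Rabs (t - x) <= Rabs (z - x) -> ex_derive f t /\ Rabs (Derive f t) <= e) ->
  Rabs (dq f x z) <= e.
Proof.
  intros Hf. unfold dq. destruct (Req_EM_T z x) as [->|Hzx].
  - apply Hf. lra.
  - assert (Hvar := bounded_variation f (Derive f) e x z).
    assert (Hzx' : 0 < Rabs (z - x)) by (apply Rabs_pos_lt; lra).
    replace ((f x - f z) / (x - z)) with ((f z - f x) / (z - x)) by (field; lra).
    rewrite Rabs_div by lra. apply Rle_div_l; [exact Hzx'|].
    apply Hvar. intros t Ht. destruct (Hf t Ht) as [Hd He].
    split; [apply Derive_correct|]; assumption.
Qed.

Section Profile.

Variable h : R -> R.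
Hypothesis h_smooth : smooth h.
Hypothesis h_left : forall T, T <= 0 -> h T = PI / 2.
Hypothesis h_mid : forall T, 0 < T < 1 -> 0 < h T < PI / 2.
Hypothesis h_right : forall T, 1 <= T -> h T = 0.

Local Notation g := (g_of h).
Local Notation B := (B_of h).

Lemma ex_derive_h (z : R) : ex_derive h z.
Proof. exact (h_smooth 0%nat z). Qed.

Lemma sin_h_pos (z : R) : z < 1 -> 0 < sin (h z).
Proof.
  intros Hz. destruct (Rle_lt_dec z 0) as [Hz0|Hz0].
  - rewrite h_left, sin_PI2 by exact Hz0. lra.
  - destruct (h_mid z) as [Hh Hh']; [lra|]. apply sin_gt_0; lra.
Qed.

Lemma cos_h_pos (z : R) : 0 < z -> 0 < cos (h z).
Proof.
  intros Hz. destruct (Rlt_le_dec z 1) as [Hz1|Hz1].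
  - destruct (h_mid z) as [Hh Hh']; [lra|]. apply cos_gt_0; lra.
  - rewrite h_right, cos_0 by exact Hz1. lra.
Qed.

Lemma cot_h_ge0 (z : R) : z < 1 -> 0 <= cot (h z).
Proof.
  intros Hz. apply Rdiv_le_0_compat; [|exact (sin_h_pos z Hz)].
  destruct (Rle_lt_dec z 0) as [Hz0|Hz0].
  - rewrite h_left, cos_PI2 by exact Hz0. lra.
  - left. exact (cos_h_pos z Hz0).
Qed.

Lemma cot_h_mul_g (z : R) : 0 < z < 1 -> cot (h z) * g z = 1.
Proof.
  intros Hz. pose proof (sin_h_pos z ltac:(lra)). pose proof (cos_h_pos z ltac:(lra)).
  unfold cot, g_of, tan. field. lra.
Qed.

Lemma g_pos (z : R) : 0 < z < 1 -> 0 < g z.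
Proof.
  intros Hz. apply Rdiv_lt_0_compat; [apply sin_h_pos | apply cos_h_pos]; lra.
Qed.

Lemma g_1 : g 1 = 0.
Proof. unfold g_of. rewrite h_right by lra. apply tan_0. Qed.

Lemma is_derive_g (z : R) : 0 < z -> is_derive g z ((g z ^ 2 + 1) * Derive h z).
Proof.
  intros Hz. rewrite Rmult_comm. apply (is_derive_comp tan h).
  - apply is_derive_tan. pose proof (cos_h_pos z Hz). lra.
  - apply Derive_correct, ex_derive_h.
Qed.

Lemma ex_derive_g (z : R) : 0 < z -> ex_derive g z.
Proof. intros Hz. eexists. exact (is_derive_g z Hz). Qed.

Lemma Derive_g_1 : Derive g 1 = 0.
Proof.
  apply (Derive_local_min g 0 2 1); [lra | apply ex_derive_g; lra |].
  intros y Hy. rewrite g_1. destruct (Rlt_le_dec y 1) as [Hy1|Hy1].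
  - left. apply g_pos. lra.
  - unfold g_of. rewrite h_right, tan_0 by exact Hy1. lra.
Qed.

Lemma continuous_Derive_g_1 : continuous (Derive g) 1.
Proof.
  apply (continuous_ext_loc _ (fun z => (g z ^ 2 + 1) * Derive h z)).
  - exists (mkposreal 1 Rlt_0_1). intros y Hy.
    change (Rabs (y - 1) < 1) in Hy. apply Rabs_def2 in Hy.
    symmetry. apply is_derive_unique, is_derive_g. lra.
  - apply (@continuous_mult R_UniformSpace R_AbsRing).
    + apply (@ex_derive_continuous R_AbsRing R_NormedModule). auto_derive. apply ex_derive_g; lra.
    + apply (@ex_derive_continuous R_AbsRing R_NormedModule), (h_smooth 1%nat).
Qed.

Lemma Derive_g_small (e : R) : 0 < e ->
  exists d, 0 < d <= 1 /\
    forall c, Rabs (c - 1) < d -> ex_derive g c /\ Rabs (Derive g c) <= e.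
Proof.
  intros He. assert (Hc := continuous_Derive_g_1). unfold continuous in Hc.
  rewrite Derive_g_1 in Hc.
  destruct (proj1 (filterlim_locally _ _) Hc (mkposreal e He)) as [d Hd].
  exists (Rmin d 1). split; [split; [apply Rmin_glb_lt; [apply cond_pos | lra] | apply Rmin_r]|].
  intros c Hc1. assert (Hcd : Rabs (c - 1) < d) by (eapply Rlt_le_trans; [exact Hc1 | apply Rmin_l]).
  assert (Hc1' : Rabs (c - 1) < 1) by (eapply Rlt_le_trans; [exact Hc1 | apply Rmin_r]).
  apply Rabs_def2 in Hc1'. split; [apply ex_derive_g; lra|].
  left. specialize (Hd c Hcd). change (Rabs (Derive g c - 0) < e) in Hd.
  rewrite Rminus_0_r in Hd. exact Hd.
Qed.

Lemma g_lt_1_near_1 : at_left 1 (fun x => g x < 1).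
Proof.
  assert (Hc := @ex_derive_continuous R_AbsRing R_NormedModule g 1 (ex_derive_g 1 Rlt_0_1)).
  unfold continuous in Hc. rewrite g_1 in Hc.
  apply filter_le_within.
  apply (filter_imp (fun x => ball 0 (mkposreal 1 Rlt_0_1) (g x))).
  - intros x Hx. change (Rabs (g x - 0) < 1) in Hx. apply Rabs_def2 in Hx. lra.
  - exact (proj1 (filterlim_locally _ _) Hc _).
Qed.

Lemma continuous_cot_h (z : R) : z < 1 -> continuous (fun t => cot (h t)) z.
Proof.
  intros Hz. apply (@ex_derive_continuous R_AbsRing R_NormedModule).
  pose proof (sin_h_pos z Hz). unfold cot. auto_derive.
  repeat split; try apply ex_derive_h. lra.
Qed.

Lemma ex_RInt_cot_h (u v : R) : u < 1 -> v < 1 -> ex_RInt (fun z => cot (h z)) u v.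
Proof.
  intros Hu Hv. apply (@ex_RInt_continuous R_CompleteNormedModule).
  intros z Hz. apply continuous_cot_h. pose proof (Rmax_lub_lt u v 1 Hu Hv). lra.
Qed.

Lemma RInt_cot_h_ge0 (u v : R) : u <= v -> v < 1 -> 0 <= RInt (fun z => cot (h z)) u v.
Proof.
  intros Huv Hv. apply RInt_ge_0; [exact Huv | apply ex_RInt_cot_h; lra |].
  intros z Hz. apply cot_h_ge0. lra.
Qed.

Lemma B_pos (y : R) : 0 < B y.
Proof. apply exp_pos. Qed.

Lemma B_0 : B 0 = 1.
Proof. unfold B_of. rewrite RInt_point. apply exp_0. Qed.

Lemma B_split (u v : R) : u < 1 -> v < 1 ->
  B v = B u * exp (RInt (fun z => cot (h z)) u v).
Proof.
  intros Hu Hv. unfold B_of. rewrite <- exp_plus. f_equal. symmetry.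
  apply (RInt_Chasles (fun z => cot (h z))); apply ex_RInt_cot_h; lra.
Qed.

Lemma B_le (u v : R) : u <= v -> v < 1 -> B u <= B v.
Proof.
  intros Huv Hv. rewrite (B_split u v) by lra.
  pose proof (exp_ineq1_le (RInt (fun z => cot (h z)) u v)).
  pose proof (RInt_cot_h_ge0 u v Huv Hv). pose proof (B_pos u). nra.
Qed.

Lemma B_ge_1 (y : R) : 0 <= y < 1 -> 1 <= B y.
Proof. intros Hy. rewrite <- B_0. apply B_le; lra. Qed.

Lemma is_derive_B (y : R) : y < 1 -> is_derive B y (B y * cot (h y)).
Proof.
  intros Hy.
  assert (HI : is_derive (fun t => RInt (fun z => cot (h z)) 0 t) y (cot (h y))).
  { apply (is_derive_RInt (fun z => cot (h z)) _ 0 y); [| exact (continuous_cot_h y Hy)].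
    exists (mkposreal (1 - y) ltac:(lra)). intros t Ht.
    change (Rabs (t - y) < 1 - y) in Ht. apply Rabs_def2 in Ht.
    apply (@RInt_correct R_CompleteNormedModule), ex_RInt_cot_h; lra. }
  assert (HE := is_derive_comp exp _ y _ _ (is_derive_exp _) HI).
  rewrite Rmult_comm. exact HE.
Qed.

Lemma Derive_B (y : R) : y < 1 -> Derive B y = B y * cot (h y).
Proof. intros Hy. exact (is_derive_unique _ _ _ (is_derive_B y Hy)). Qed.

Lemma Derive_B_ge0 (y : R) : y < 1 -> 0 <= Derive B y.
Proof.
  intros Hy. rewrite Derive_B by exact Hy.
  apply Rmult_le_pos; [left; apply B_pos | exact (cot_h_ge0 y Hy)].
Qed.

Lemma continuous_Derive_B (y : R) : y < 1 -> continuous (Derive B) y.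
Proof.
  intros Hy. apply (continuous_ext_loc _ (fun t => B t * cot (h t))).
  - exists (mkposreal (1 - y) ltac:(lra)). intros t Ht.
    change (Rabs (t - y) < 1 - y) in Ht. apply Rabs_def2 in Ht.
    symmetry. apply Derive_B. lra.
  - apply (@continuous_mult R_UniformSpace R_AbsRing); [|exact (continuous_cot_h y Hy)].
    apply (@ex_derive_continuous R_AbsRing R_NormedModule).
    eexists. exact (is_derive_B y Hy).
Qed.

Lemma is_RInt_Derive_B (u v : R) : u <= v -> v < 1 -> is_RInt (Derive B) u v (B v - B u).
Proof.
  intros Huv Hv.
  apply (@is_RInt_derive R_CompleteNormedModule); intros t Ht;
    rewrite Rmin_left, Rmax_right in Ht by exact Huv.
  - apply Derive_correct. eexists. apply is_derive_B. lra.
  - apply continuous_Derive_B. lra.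
Qed.

Lemma B_unbounded (M : R) : at_left 1 (fun x => M <= B x).
Proof.
  set (L := Rabs M + 1).
  assert (HL : 0 < L) by (unfold L; pose proof (Rabs_pos M); lra).
  destruct (Derive_g_small (/ (2 * L))) as [d [Hd Hg']].
  { apply Rinv_0_lt_compat. lra. }
  apply (at_left_of_interval 1 (d / 2)); [lra|]. intros x Hx.
  set (m := 2 * x - 1).
  (* g(z) <= (1 - z) / (2 L) near 1, so cot (h z) = 1 / g z >= L / (1 - x) on
     [m, x], an interval of length 1 - x. *)
  assert (Hcot : forall z, m <= z <= x -> L / (1 - x) <= cot (h z)).
  { intros z Hz.
    assert (Hgz : Rabs (g z - g 1) <= / (2 * L) * Rabs (z - 1)).
    { apply (bounded_variation g (Derive g)). intros t Ht.
      assert (Hz1 : Rabs (z - 1) < d) by (rewrite Rabs_left; unfold m in Hz; lra).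
      destruct (Hg' t ltac:(lra)) as [Hdt Het].
      split; [apply Derive_correct|]; assumption. }
    rewrite g_1, Rminus_0_r, Rabs_pos_eq, Rabs_left in Hgz
      by (try (left; apply g_pos); unfold m in Hz; lra).
    assert (Hg : 0 < g z) by (apply g_pos; unfold m in Hz; lra).
    apply (Rmult_le_reg_r (g z)); [exact Hg|].
    rewrite cot_h_mul_g by (unfold m in Hz; lra).
    replace (L / (1 - x) * g z) with ((L * g z) / (1 - x)) by (field; lra).
    apply Rle_div_l; [lra|].
    assert (Hk : / (2 * L) * (2 * L) = 1) by (field; lra).
    unfold m in Hz. nra. }
  assert (HI : L <= RInt (fun z => cot (h z)) m x).
  { apply (Rle_trans _ (RInt (fun _ => L / (1 - x)) m x)).
    - rewrite RInt_const. change (L <= (x - m) * (L / (1 - x))).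
      unfold m. right. field. lra.
    - apply RInt_le; [unfold m; lra | apply ex_RInt_const | apply ex_RInt_cot_h; unfold m; lra |].
      intros z Hz. apply Hcot. lra. }
  rewrite (B_split m x) by (unfold m; lra).
  pose proof (B_ge_1 m ltac:(unfold m; lra)).
  pose proof (exp_ineq1_le (RInt (fun z => cot (h z)) m x)).
  pose proof (Rle_abs M). unfold L in *. nra.
Qed.

Definition C_integrand (x z : R) : R := cos (x - z) * Derive B z * dq g x z.

(* Equal to [C_integrand x] on (0, x) since B' g = B there; unlike g, which blows
   up at 0, it is continuous on [0, x). *)
Definition C_integrand_far (x z : R) : R :=
  cos (x - z) * (Derive B z * g x - B z) / (x - z).

Lemma C_integrand_eq_far (x z : R) : 0 < z < x -> x < 1 ->
  C_integrand x z = C_integrand_far x z.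
Proof.
  intros Hz Hx. unfold C_integrand, C_integrand_far, dq.
  destruct (Req_EM_T z x) as [Hzx|_]; [lra|].
  rewrite Derive_B by lra.
  transitivity (cos (x - z) * (B z * cot (h z) * g x - B z * (cot (h z) * g z)) / (x - z)).
  - field. lra.
  - rewrite cot_h_mul_g, Rmult_1_r by lra. reflexivity.
Qed.

Lemma ex_RInt_C_integrand_far (x a : R) : 0 <= a < x -> x < 1 ->
  ex_RInt (C_integrand_far x) 0 a.
Proof.
  intros Ha Hx. apply (@ex_RInt_continuous R_CompleteNormedModule). intros z Hz.
  rewrite Rmin_left, Rmax_right in Hz by lra.
  apply (@continuous_mult R_UniformSpace R_AbsRing).
  - apply (@continuous_mult R_UniformSpace R_AbsRing).
    + apply (@ex_derive_continuous R_AbsRing R_NormedModule). auto_derive. exact I.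
    + apply (@continuous_minus R_UniformSpace R_AbsRing R_NormedModule).
      * apply (@continuous_mult R_UniformSpace R_AbsRing);
          [apply continuous_Derive_B; lra | apply continuous_const].
      * apply (@ex_derive_continuous R_AbsRing R_NormedModule).
        eexists. apply is_derive_B. lra.
  - apply (@ex_derive_continuous R_AbsRing R_NormedModule). auto_derive. lra.
Qed.

Lemma RInt_C_integrand_left (x a : R) : 0 <= a < x -> x < 1 ->
  is_RInt (C_integrand x) 0 a (RInt (C_integrand_far x) 0 a).
Proof.
  intros Ha Hx.
  apply (is_RInt_ext (C_integrand_far x)).
  - intros z Hz. rewrite Rmin_left, Rmax_right in Hz by lra.
    symmetry. apply C_integrand_eq_far; lra.
  - apply (@RInt_correct R_CompleteNormedModule), ex_RInt_C_integrand_far; assumption.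
Qed.

Lemma ex_RInt_C_integrand_right (x a : R) : 0 < a <= x -> x < 1 ->
  ex_RInt (C_integrand x) a x.
Proof.
  intros Ha Hx. apply (@ex_RInt_continuous R_CompleteNormedModule). intros z Hz.
  rewrite Rmin_left, Rmax_right in Hz by lra.
  apply (@continuous_mult R_UniformSpace R_AbsRing).
  - apply (@continuous_mult R_UniformSpace R_AbsRing).
    + apply (@ex_derive_continuous R_AbsRing R_NormedModule). auto_derive. exact I.
    + apply continuous_Derive_B. lra.
  - apply continuous_dq; apply ex_derive_g; lra.
Qed.

Lemma Rabs_C_integrand_far_le (x a ep z : R) :
  0 < ep -> a + ep <= x -> x < 1 -> 0 < g x <= 1 -> 0 <= z <= a ->
  Rabs (C_integrand_far x z) <= / ep * Derive B z + / ep * B a.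
Proof.
  intros Hep Hax Hx Hgx Hz. unfold C_integrand_far.
  pose proof (Derive_B_ge0 z ltac:(lra)). pose proof (B_pos z).
  pose proof (B_le z a ltac:(lra) ltac:(lra)).
  assert (Hnum : Rabs (cos (x - z) * (Derive B z * g x - B z)) <= Derive B z + B a).
  { rewrite Rabs_mult. pose proof (COS_bound (x - z)).
    assert (Hcos : Rabs (cos (x - z)) <= 1) by (apply Rabs_le; lra).
    assert (Hdiff : Rabs (Derive B z * g x - B z) <= Derive B z + B a)
      by (apply Rabs_le; split; nra).
    pose proof (Rabs_pos (cos (x - z))). pose proof (Rabs_pos (Derive B z * g x - B z)).
    nra. }
  rewrite Rabs_div, (Rabs_pos_eq (x - z)) by lra.
  apply Rle_div_l; [lra|].
  assert (Hr : 1 <= / ep * (x - z)).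
  { rewrite <- (Rinv_l ep) by lra.
    apply Rmult_le_compat_l; [left; apply Rinv_0_lt_compat|]; lra. }
  replace ((/ ep * Derive B z + / ep * B a) * (x - z))
    with ((Derive B z + B a) * (/ ep * (x - z))) by ring.
  nra.
Qed.

Lemma RInt_C_integrand_left_le (x a ep : R) :
  0 <= a -> 0 < ep -> a + ep <= x -> x < 1 -> g x <= 1 ->
  Rabs (RInt (C_integrand x) 0 a) <= 2 * B a / ep.
Proof.
  intros Ha Hep Hax Hx Hgx.
  assert (Hgx0 : 0 < g x) by (apply g_pos; lra).
  assert (Hbound : is_RInt (fun z => / ep * Derive B z + / ep * B a) 0 a
                     (/ ep * (B a - B 0) + (a - 0) * (/ ep * B a))).
  { apply (is_RInt_plus (fun z => / ep * Derive B z) (fun _ => / ep * B a)).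
    - apply (is_RInt_scal (Derive B)), is_RInt_Derive_B; lra.
    - exact (is_RInt_const 0 a (/ ep * B a)). }
  rewrite (is_RInt_unique _ _ _ _ (RInt_C_integrand_left x a ltac:(lra) Hx)).
  apply (Rle_trans _ (/ ep * (B a - B 0) + (a - 0) * (/ ep * B a))).
  - refine (norm_RInt_le (C_integrand_far x) _ 0 a _ _ Ha _
      (RInt_correct _ _ _ (ex_RInt_C_integrand_far x a ltac:(lra) Hx)) Hbound).
    intros z Hz. apply (Rabs_C_integrand_far_le x a ep z); lra.
  - rewrite B_0. pose proof (B_pos a).
    replace (/ ep * (B a - 1) + (a - 0) * (/ ep * B a)) with ((B a - 1 + a * B a) / ep)
      by (field; lra).
    apply Rmult_le_compat_r; [left; apply Rinv_0_lt_compat; lra | nra].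
Qed.

Lemma RInt_C_integrand_right_le (x a e : R) : 0 < a <= x -> x < 1 ->
  (forall t, Rabs (t - x) <= x - a -> ex_derive g t /\ Rabs (Derive g t) <= e) ->
  Rabs (RInt (C_integrand x) a x) <= e * (B x - B a).
Proof.
  intros Ha Hx Hg.
  refine (norm_RInt_le (C_integrand x) (fun z => e * Derive B z) a x _ _ (proj2 Ha) _
    (RInt_correct _ _ _ (ex_RInt_C_integrand_right x a Ha Hx))
    (is_RInt_scal _ _ _ e _ (is_RInt_Derive_B a x (proj2 Ha) Hx))).
  intros z Hz. change (Rabs (C_integrand x z) <= e * Derive B z). unfold C_integrand.
  assert (Hdq : Rabs (dq g x z) <= e).
  { apply Rabs_dq_le. intros t Ht. apply Hg.
    rewrite (Rabs_left1 (z - x)) in Ht by lra. lra. }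
  pose proof (Derive_B_ge0 z ltac:(lra)).
  pose proof (COS_bound (x - z)).
  assert (Hcos : Rabs (cos (x - z)) <= 1) by (apply Rabs_le; lra).
  rewrite !Rabs_mult, (Rabs_pos_eq (Derive B z)) by assumption.
  apply (Rle_trans _ (1 * Derive B z * e)); [|right; ring].
  apply Rmult_le_compat; [| apply Rabs_pos | | exact Hdq].
  - apply Rmult_le_pos; [apply Rabs_pos | assumption].
  - apply Rmult_le_compat_r; assumption.
Qed.

Lemma Rabs_C_of_le (x ep e : R) : 0 < ep < x -> x < 1 -> g x <= 1 ->
  (forall t, Rabs (t - x) <= ep -> ex_derive g t /\ Rabs (Derive g t) <= e) ->
  Rabs (C_of h x) <= 2 * B (1 - ep) / ep / B x + e.
Proof.
  intros Hep Hx Hgx Hg.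
  set (a := x - ep).
  assert (He : 0 <= e).
  { destruct (Hg x ltac:(rewrite Rminus_diag, Rabs_R0; lra)) as [_ He].
    pose proof (Rabs_pos (Derive g x)). lra. }
  assert (Hleft : Rabs (RInt (C_integrand x) 0 a) <= 2 * B (1 - ep) / ep).
  { apply (Rle_trans _ (2 * B a / ep)).
    - apply RInt_C_integrand_left_le; unfold a; lra.
    - unfold Rdiv. apply Rmult_le_compat_r; [left; apply Rinv_0_lt_compat; lra|].
      apply Rmult_le_compat_l; [lra|]. apply B_le; unfold a; lra. }
  assert (Hright : Rabs (RInt (C_integrand x) a x) <= e * B x).
  { apply (Rle_trans _ (e * (B x - B a))).
    - apply RInt_C_integrand_right_le; [unfold a; lra | exact Hx |].
      intros t Ht. apply Hg. unfold a in Ht. lra.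
    - pose proof (B_pos a). nra. }
  change (C_of h x) with (/ B x * RInt (C_integrand x) 0 x).
  rewrite <- (RInt_Chasles (C_integrand x) 0 a x).
  2: { eexists. apply RInt_C_integrand_left; unfold a; lra. }
  2: { apply ex_RInt_C_integrand_right; unfold a; lra. }
  change (plus ?u ?v) with (u + v).
  pose proof (B_pos x) as HBx.
  rewrite Rabs_mult, Rabs_inv, (Rabs_pos_eq (B x)) by lra.
  replace (2 * B (1 - ep) / ep / B x + e) with (/ B x * (2 * B (1 - ep) / ep + e * B x))
    by (field; lra).
  apply Rmult_le_compat_l; [left; apply Rinv_0_lt_compat; exact HBx|].
  pose proof (Rabs_triang (RInt (C_integrand x) 0 a) (RInt (C_integrand x) a x)).
  lra.
Qed.

Lemma C_of_tendsto_0 : filterlim (C_of h) (at_left 1) (locally 0).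
Proof.
  apply filterlim_locally. intros eps. pose proof (cond_pos eps) as Heps.
  destruct (Derive_g_small (eps / 4)) as [d [Hd Hg']]; [lra|].
  set (ep := d / 2).
  set (K := 2 * B (1 - ep) / ep).
  assert (Hnear : at_left 1 (fun x => 1 - ep < x < 1 /\ g x < 1 /\ 4 * K / eps <= B x)).
  { apply filter_and; [| apply filter_and; [apply g_lt_1_near_1 | apply B_unbounded]].
    apply (at_left_of_interval 1 ep); [unfold ep; lra | tauto]. }
  revert Hnear. apply filter_imp. intros x (Hx & Hgx & HBx).
  change (Rabs (C_of h x - 0) < eps). rewrite Rminus_0_r.
  assert (HC : Rabs (C_of h x) <= K / B x + eps / 4).
  { apply Rabs_C_of_le; [unfold ep in *; lra | lra | lra |].
    intros t Ht. apply Hg'. apply Rabs_le_between in Ht.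
    apply Rabs_def1; unfold ep in *; lra. }
  pose proof (B_pos x) as HBpos.
  apply Rle_div_l in HBx; [|exact Heps].
  assert (HK : K / B x <= eps / 4) by (apply Rle_div_l; lra).
  lra.
Qed.

End Profile.

Theorem mainTheorem4 (h : R -> R) :
  smooth h ->
  (forall T, T <= 0 -> h T = PI / 2) ->
  (forall T, 0 < T < 1 -> 0 < h T < PI / 2) ->
  (forall T, 1 <= T -> h T = 0) ->
  (forall x, 0 < x < 1 -> Derive_n (g_of h) 3 x < 0) ->
  filterlim (C_of h) (at_left 1) (locally 0).
Proof.
  intros h_smooth h_left h_mid h_right _.
  exact (C_of_tendsto_0 h h_smooth h_left h_mid h_right).
Qed.
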